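(* Let $d\ge2$, $\delta\in[0,1/d]$, and let $N$ be a $\delta$-upper bounded matrix of dimension $d\times d$. Then $$\inf_{x\in\mathbb{R}^d,\ \|x\|_\infty=1}\|N x\|_\infty\ \ge\ \frac{1-d\delta}{d-1}.$$
   Context: A $d\times d$ matrix $N$ is $\delta$-upper bounded if it is stochastic (non-negative entries, rows summing to $1$), $N_{i,i}\ge1-(d-1)\delta$ for all $i$, and $N_{i,j}\le\delta$ for all $i\ne j$. Here $\|\cdot\|_\infty$ is the maximum norm on $\mathbb{R}^d$. *)

From mathcomp Require Import all_boot all_order all_algebra.
Set Implicit Arguments. Unset Strict Implicit. Unset Printing Implicit Defensive.
Import Order.TTheory GRing.Theory Num.Theory.
Local Open Scope ring_scope.

Definition maxnorm (R : realFieldType) (d : nat) (x : 'cV[R]_d) : R :=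
  \big[Num.max/0]_(i < d) `|x i 0|.

Definition upper_bounded (R : realFieldType) (d : nat) (delta : R) (N : 'M[R]_d) : Prop :=
  [/\ (forall i j, 0 <= N i j),
      (forall i, \sum_(j < d) N i j = 1),
      (forall i, 1 - (d%:R - 1) * delta <= N i i) &
      (forall i j, i != j -> N i j <= delta)].

From mathcomp Require Import all_boot all_order all_algebra.
From mathcomp Require Import lra.
Import Order.TTheory GRing.Theory Num.Theory.
Local Open Scope ring_scope.

(* Subtracting delta from every entry writes N x = A x + delta (sum x) 1, where
   A has row sums c = 1 - d delta >= 0 and nonpositive off-diagonal entries.
   For such an A, (A x)_i >= c x_i at a maximal coordinate i of x and
   (A x)_m <= c x_m at a minimal one m.  Normalize so that x_i = 1.  If
   sum x >= 0, row i gives |N x| >= c.  Otherwise sum x >= 1 + (d - 1) x_m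
   forces -x_m >= 1 / (d - 1), and row m gives |N x| >= - c x_m. *)

Section MaxNorm.
Context {R : realFieldType} {d : nat}.
Implicit Types x : 'cV[R]_d.

Lemma ler_maxnorm x k : `|x k 0| <= maxnorm x.
Proof. exact: le_bigmax. Qed.

Lemma maxnorm_attained x : (0 < d)%N -> exists k, maxnorm x = `|x k 0|.
Proof.
move=> d_gt0; rewrite /maxnorm.
have [k _ ->] := eq_bigmax (Ordinal d_gt0) xpredT (fun i => `|x i 0|) isT
  (fun i _ => normr_ge0 (x i 0)).
by exists k.
Qed.

Lemma maxnormN x : maxnorm (- x) = maxnorm x.
Proof. by apply: eq_bigr => i _; rewrite mxE normrN. Qed.

Lemma sum_ge_max_min x i m : (forall j, x m 0 <= x j 0) ->
  x i 0 + (d%:R - 1) * x m 0 <= \sum_j x j 0.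
Proof.
move=> xm_min.
have : x i 0 - x m 0 <= \sum_j (x j 0 - x m 0).
  rewrite (bigD1 i) //= lerDl; apply: sumr_ge0 => j _.
  by rewrite subr_ge0.
by rewrite sumrB sumr_const card_ord -mulr_natl; lra.
Qed.

End MaxNorm.

Section ZMatrix.
Context {R : realFieldType} {d : nat} {c : R} {A : 'M[R]_d}.
Hypothesis rowsumA : forall k, \sum_j A k j = c.
Hypothesis offdiagA : forall k j, k != j -> A k j <= 0.
Implicit Types x : 'cV[R]_d.

Lemma row_argmax_ge x i : (forall j, x j 0 <= x i 0) ->
  c * x i 0 <= (A *m x) i 0.
Proof.
move=> xi_max; rewrite -subr_ge0 -(rowsumA i) mulr_suml mxE -sumrB.
apply: sumr_ge0 => j _; rewrite -mulrBr.
have [<-|ij] := eqVneq i j; first by rewrite subrr mulr0.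
by rewrite mulr_le0 ?offdiagA // subr_le0.
Qed.

Lemma row_argmin_le x m : (forall j, x m 0 <= x j 0) ->
  (A *m x) m 0 <= c * x m 0.
Proof.
move=> xm_min; have := @row_argmax_ge (- x) m.
by rewrite mulmxN !mxE mulrN lerN2; apply=> j; rewrite !mxE lerN2.
Qed.

End ZMatrix.

Lemma extreme_rows_bound (R : realFieldType) (c delta s u M D : R) :
  0 <= c -> 0 <= delta -> 1 <= D -> 1 + D * u <= s ->
  c + delta * s <= M -> - (c * u + delta * s) <= M -> c / D <= M.
Proof.
move=> c_ge0 delta_ge0 D_ge1 s_ge row_max row_min.
rewrite ler_pdivrMr; last lra.
have [s_ge0|s_lt0] := lerP 0 s.
  have c_le_M : c <= M by nra.
  nra.
have cu_le_M : - (c * u) <= M by nra.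
nra.
Qed.

Section UpperBounded.
Context {R : realFieldType} {d : nat} {delta : R} {N : 'M[R]_d}.
Hypothesis d_ge2 : (2 <= d)%N.
Hypothesis delta_ge0 : 0 <= delta.
Hypothesis delta_le : delta <= d%:R^-1.
Hypothesis rowsumN : forall k, \sum_j N k j = 1.
Hypothesis offdiagN : forall k j, k != j -> N k j <= delta.

Implicit Types x : 'cV[R]_d.

Let A : 'M[R]_d := N - const_mx delta.

Lemma mulmx_shifted x k : (N *m x) k 0 = (A *m x) k 0 + delta * \sum_j x j 0.
Proof.
rewrite !mxE mulr_sumr -big_split /=; apply: eq_bigr => j _.
by rewrite /A !mxE mulrBl subrK.
Qed.

Lemma rowsum_shifted k : \sum_j A k j = 1 - d%:R * delta.
Proof.
rewrite (eq_bigr (fun j => N k j - delta)) => [|j _]; last by rewrite !mxE.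
by rewrite sumrB rowsumN sumr_const card_ord mulr_natl.
Qed.

Lemma offdiag_shifted k j : k != j -> A k j <= 0.
Proof. by move=> kj; rewrite !mxE subr_le0 offdiagN. Qed.

Lemma maxnorm_mulmx_ge_at_one x i : x i 0 = 1 -> (forall j, x j 0 <= 1) ->
  (1 - d%:R * delta) / (d%:R - 1) <= maxnorm (N *m x).
Proof.
move=> xi1 x_le1.
have d_ge : (2%:R : R) <= d%:R by rewrite ler_nat.
have c_ge0 : 0 <= 1 - d%:R * delta.
  have : delta * d%:R <= 1 by rewrite -ler_pdivlMr ?div1r //; lra.
  by rewrite mulrC; lra.
have [m _ xm_min] := @arg_minP _ R _ i xpredT (fun j => x j 0) isT.
have {}xm_min j : x m 0 <= x j 0 := xm_min j isT.
have xi_max j : x j 0 <= x i 0 by rewrite xi1.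
apply: (@extreme_rows_bound _ _ _ (\sum_j x j 0) (x m 0) _ _ c_ge0 delta_ge0).
- lra.
- by have := sum_ge_max_min x i m xm_min; rewrite xi1.
- apply: le_trans _ (ler_normlW (ler_maxnorm (N *m x) i)).
  rewrite mulmx_shifted lerD2r.
  by have := row_argmax_ge rowsum_shifted offdiag_shifted x i xi_max; rewrite xi1 mulr1.
- have Mm : - (N *m x) m 0 <= maxnorm (N *m x).
    by apply: ler_normlW; rewrite normrN ler_maxnorm.
  apply: le_trans _ Mm.
  rewrite mulmx_shifted !opprD lerD2r lerN2.
  exact: row_argmin_le rowsum_shifted offdiag_shifted x m xm_min.
Qed.

End UpperBounded.

Theorem lemma13 (R : realFieldType) (d : nat) (delta : R) (N : 'M[R]_d) :
  (2 <= d)%N -> 0 <= delta -> delta <= d%:R^-1 ->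
  upper_bounded delta N ->
  forall x : 'cV[R]_d, maxnorm x = 1 ->
    (1 - d%:R * delta) / (d%:R - 1) <= maxnorm (N *m x).
Proof.
move=> d_ge2 delta_ge0 delta_le [_ rowsumN _ offdiagN] x x_unit.
have [k xk] := maxnorm_attained x (ltnW d_ge2).
have x_le1 j : `|x j 0| <= 1 by rewrite -x_unit ler_maxnorm.
have bound := maxnorm_mulmx_ge_at_one d_ge2 delta_ge0 delta_le rowsumN offdiagN.
have /eqP := xk; rewrite x_unit eq_sym eqr_norml => /andP[/orP[]/eqP xk1 _].
  by apply: bound xk1 _ => j; exact: ler_normlW.
rewrite -maxnormN -mulmxN; apply: (bound _ k); first by rewrite mxE xk1 opprK.
by move=> j; rewrite mxE; apply: ler_normlW; rewrite normrN.
Qed.
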